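(* Assume $\lim_{\epsilon\to0}\frac{h_{ex}}{|\ln\epsilon|}=h_0\in[0,\infty)$. Let $(v_0,\vec A_0)\in V\times K_0$ be a minimizer of $\mathcal G_{h_0}$ and define $$\vec A^\epsilon(x)=|\ln\epsilon|\vec A_0(x)+(h_{ex}-h_0|\ln\epsilon|)\vec a(x).$$ Then $$\hat A^{\epsilon,s}:=\sum_{n=0}^{N-1}\frac{\hat A^\epsilon_n}{|\ln\epsilon|}\chi_n\to\hat A_0\quad\text{in }L^2(D;\mathbb R^2)$$ as $(\epsilon,s)\to(0,0)$, where $\hat A^\epsilon_n(\hat x)=(A^{\epsilon,1}(\hat x,ns),A^{\epsilon,2}(\hat x,ns))$ and $\hat A_0=(A_0^1,A_0^2)$.
   Context: Let $\Omega\subset\mathbb R^2$ be a bounded simply connected smooth domain, $L>0$, $D=\Omega\times(0,L)$, $s=L/N$ with $N$ a positive integer; $h_{ex}=h_{ex}(\epsilon)>0$. Points are $x=(\hat x,x_3)$; for $\vec A=(A^1,A^2,A^3)$, $\hat A=(A^1,A^2)$. $\vec a(x)=\frac12(-x_2,x_1,0)$. $\check H^1(\mathbb R^3;\mathbb R^3)$ is the completion of $C_c^\infty(\mathbb R^3;\mathbb R^3)$ under $(\int|\nabla\vec C|^2)^{1/2}$. $E_0:=\{\vec C\in H^1_{loc}(\mathbb R^3;\mathbb R^3):\nabla\times\vec C-h_0\vec e_3\in L^2\}$, $K_0:=\{\vec C\in E_0:\nabla\cdot\vec C=0,\ \vec C-h_0\vec a\in\check H^1\cap L^6(\mathbb R^3;\mathbb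 R^3)\}$. $\operatorname{curl}v=\partial_1v^2-\partial_2v^1$; $V:=\{v\in L^2(D;\mathbb R^2):\operatorname{curl}v\text{ is a finite Radon measure on }D\}$. $\mathcal G_{h_0}(v,\vec A)=\frac12\big[\|v-\hat A\|^2_{L^2(D)}+|\operatorname{curl}v|(D)+\|\nabla\times\vec A-h_0\vec e_3\|^2_{L^2(\mathbb R^3)}\big]$ (with $+\infty$ if $\operatorname{curl}v$ is not a finite measure). The components $A_0^1,A_0^2$ of a minimizer are continuous, so their traces on the planes $x_3=ns$ are defined classically. $\chi_0=\chi_{(0,s)}(x_3)$, $\chi_n=\chi_{[ns,(n+1)s)}(x_3)$ for $1\le n\le N-1$. *)

From HB Require Import structures.
From mathcomp Require Import all_boot all_order all_algebra.
From mathcomp Require Import all_classical all_reals all_analysis.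
Import Order.TTheory GRing.Theory Num.Theory.
Import numFieldNormedType.Exports.
Local Open Scope classical_set_scope.
Local Open Scope ring_scope.

Set Implicit Arguments.
Unset Strict Implicit.
Unset Printing Implicit Defensive.

Section Defs.
Context {R : realType}.

(* Points of R^2 and R^3; x = ((x1, x2), x3), so x.1 is \hat x. *)
Definition P2 := (R * R)%type.
Definition P3 := (P2 * R)%type.
Definition pt (a b c : R) : P3 := ((a, b), c).

Definition mu3 := ((@lebesgue_measure R \x @lebesgue_measure R) \x @lebesgue_measure R)%E.

(* components (0-based) and standard basis of R^3 *)
Definition comp (i : nat) (y : P3) : R :=
  match i with 0 => y.1.1 | 1 => y.1.2 | _ => y.2 end.
Definition ev (j : nat) : P3 :=
  match j with 0 => pt 1 0 0 | 1 => pt 0 1 0 | _ => pt 0 0 1 end.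

Definition iterD {V : normedModType R} (vs : seq V) (f : V -> R) : V -> R :=
  foldr (fun v g => 'D_v g) f vs.
Definition smooth {V : normedModType R} (f : V -> R) : Prop :=
  forall vs : seq V, continuous (iterD vs f) /\
    (forall (v x : V), derivable (iterD vs f) x v).

Definition test_fun (U : set P3) (phi : P3 -> R) : Prop :=
  smooth phi /\ exists K : set P3, [/\ compact K, K `<=` U &
    forall x, ~ K x -> phi x = 0].

Definition sqL2 (E : set P3) (f : P3 -> R) : \bar R :=
  (\int[mu3]_(x in E) ((f x) ^+ 2)%:E)%E.
Definition inL2 (E : set P3) (f : P3 -> R) : Prop :=
  measurable_fun E f /\ (sqL2 E f < +oo)%E.
Definition inL6 (f : P3 -> R) : Prop :=
  measurable_fun [set: P3] f /\ (\int[mu3]_x ((f x) ^+ 6)%:E < +oo)%E.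
Definition box (r : R) : set P3 :=
  [set x | `|x.1.1| <= r /\ `|x.1.2| <= r /\ `|x.2| <= r].
Definition locL2 (f : P3 -> R) : Prop := forall r : R, inL2 (box r) f.

Definition weak_partial (f g : P3 -> R) (j : nat) : Prop :=
  forall phi, test_fun [set: P3] phi ->
    (\int[mu3]_x (f x * 'D_(ev j) phi x)%:E = - \int[mu3]_x (g x * phi x)%:E)%E.

(* C in H^1_loc(R^3;R^3) with weak gradient G (G i j = d_j C^i) *)
Definition H1loc_grad (C : P3 -> P3) (G : nat -> nat -> P3 -> R) : Prop :=
  forall i, (i < 3)%N -> locL2 (comp i \o C) /\
    forall j, (j < 3)%N -> locL2 (G i j) /\ weak_partial (comp i \o C) (G i j) j.

Definition curlG (G : nat -> nat -> P3 -> R) (i : nat) (x : P3) : R :=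
  match i with
  | 0 => G 2%N 1%N x - G 1%N 2%N x
  | 1 => G 0%N 2%N x - G 2%N 0%N x
  | _ => G 1%N 0%N x - G 0%N 1%N x
  end.

Definition mag (h0 : R) (G : nat -> nat -> P3 -> R) : \bar R :=
  (\int[mu3]_x ((curlG G 0 x) ^+ 2 + (curlG G 1 x) ^+ 2
                 + (curlG G 2 x - h0) ^+ 2)%:E)%E.

Definition E0 (h0 : R) (C : P3 -> P3) (G : nat -> nat -> P3 -> R) : Prop :=
  H1loc_grad C G /\ (forall i, (i < 3)%N -> measurable_fun [set: P3] (curlG G i))
  /\ (mag h0 G < +oo)%E.

Definition div_free (C : P3 -> P3) : Prop :=
  forall phi, test_fun [set: P3] phi ->
    (\int[mu3]_x (comp 0 (C x) * 'D_(ev 0) phi x + comp 1 (C x) * 'D_(ev 1) phi x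
                  + comp 2 (C x) * 'D_(ev 2) phi x)%:E = 0)%E.

(* u in  \check H^1(R^3;R^3) \cap L^6(R^3;R^3): u in L^6, u has a weak
   gradient Gu in L^2, and Gu is an L^2-limit of gradients of C_c^infinity fields *)
Definition Hcheck_L6 (u : P3 -> P3) : Prop :=
  exists Gu : nat -> nat -> P3 -> R,
    [/\ H1loc_grad u Gu,
        (forall i, (i < 3)%N -> inL6 (comp i \o u)),
        (forall i j, (i < 3)%N -> (j < 3)%N -> inL2 [set: P3] (Gu i j)) &
        forall eta : R, 0 < eta -> exists Phi : P3 -> P3,
          (forall i, (i < 3)%N -> test_fun [set: P3] (comp i \o Phi)) /\
          (\int[mu3]_x (\sum_(i < 3) \sum_(j < 3)
               ('D_(ev j) (comp i \o Phi) x - Gu i j x) ^+ 2)%:E < eta%:E)%E].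

Definition avec (x : P3) : P3 := pt (- x.1.2 / 2) (x.1.1 / 2) 0.

(* K_0 (with the weak gradient G of C as a witness) *)
Definition K0 (h0 : R) (C : P3 -> P3) (G : nat -> nat -> P3 -> R) : Prop :=
  [/\ E0 h0 C G, div_free C & Hcheck_L6 (fun x => C x - h0 *: avec x)].

Definition cyl (Om : set P2) (L : R) : set P3 := [set x | Om x.1 /\ 0 < x.2 < L].

Definition curlTV (D : set P3) (v : P3 -> P2) : \bar R :=
  ereal_sup [set (\int[mu3]_(x in D)
                    ((v x).1 * 'D_(ev 1) phi x - (v x).2 * 'D_(ev 0) phi x)%:E)%E
            | phi in [set phi | test_fun D phi /\ forall x, `|phi x| <= 1]].

Definition inV (D : set P3) (v : P3 -> P2) : Prop :=
  [/\ inL2 D (fun x => (v x).1), inL2 D (fun x => (v x).2) & (curlTV D v < +oo)%E].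

Definition Gfun (h0 : R) (D : set P3) (v : P3 -> P2) (A : P3 -> P3)
    (G : nat -> nat -> P3 -> R) : \bar R :=
  ((2^-1)%:E * ((\int[mu3]_(x in D) (((v x).1 - (A x).1.1) ^+ 2
                                    + ((v x).2 - (A x).1.2) ^+ 2)%:E)
                + curlTV D v + mag h0 G))%E.

Definition is_minimizer (h0 : R) (D : set P3) (v0 : P3 -> P2) (A0 : P3 -> P3) : Prop :=
  inV D v0 /\ exists G0, K0 h0 A0 G0 /\
    forall v C G, inV D v -> K0 h0 C G -> (Gfun h0 D v0 A0 G0 <= Gfun h0 D v C G)%E.

Definition bounded_set2 (S : set P2) : Prop := exists M : R, forall x, S x -> `|x| < M.

Definition simply_connected (S : set P2) : Prop :=
  forall g : R -> P2, {within `[0, 1]%classic, continuous g} ->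
    (forall t, `[0, 1]%classic t -> S (g t)) -> g 0 = g 1 ->
    exists H : P2 -> P2,
      [/\ {within (`[0, 1]%classic `*` `[0, 1]%classic), continuous H},
          (forall t s, `[0, 1]%classic t -> `[0, 1]%classic s -> S (H (t, s))),
          (forall t, `[0, 1]%classic t -> H (t, 0) = g t),
          (forall t, `[0, 1]%classic t -> H (t, 1) = g 0) &
          (forall s, `[0, 1]%classic s -> H (0, s) = g 0 /\ H (1, s) = g 0)].

Definition smooth_boundary (S : set P2) : Prop :=
  forall p, closure S p -> ~ S p ->
    exists r : R, 0 < r /\ exists rho : P2 -> R,
      [/\ smooth rho, rho p = 0,
          ('D_((1 : R), (0 : R)) rho p != 0 \/ 'D_((0 : R), (1 : R)) rho p != 0) &
          forall x, ball p r x -> (S x <-> rho x < 0)].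

Definition smooth_sc_domain (S : set P2) : Prop :=
  [/\ open S, S !=set0, connected S, bounded_set2 S &
      (simply_connected S /\ smooth_boundary S)].

Definition Aeps (hex : R -> R) (h0 : R) (A0 : P3 -> P3) (e : R) (x : P3) : P3 :=
  `|ln e| *: A0 x + (hex e - h0 * `|ln e|) *: avec x.

Definition chi (s : R) (n : nat) (t : R) : R :=
  (if n == 0%N then (0 < t) && (t < s)
   else (n%:R * s <= t) && (t < n.+1%:R * s))%:R.

Definition Ahat_es (hex : R -> R) (h0 : R) (A0 : P3 -> P3) (L e : R) (N : nat)
    (x : P3) : P2 :=
  let s := L / N%:R in
  (\sum_(n < N) ((Aeps hex h0 A0 e (pt x.1.1 x.1.2 (n%:R * s))).1.1 / `|ln e|) * chi s n x.2,
   \sum_(n < N) ((Aeps hex h0 A0 e (pt x.1.1 x.1.2 (n%:R * s))).1.2 / `|ln e|) * chi s n x.2).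

End Defs.

From HB Require Import structures.
From mathcomp Require Import all_boot all_order all_algebra.
From mathcomp Require Import all_classical all_reals all_analysis.
From mathcomp Require Import ring lra.
Import Order.TTheory GRing.Theory Num.Theory.
Import numFieldNormedType.Exports.
Local Open Scope classical_set_scope.
Local Open Scope ring_scope.

(* On the slab ns <= x3 < (n+1)s the approximation differs from A0(x) by
   A0(x^, ns) - A0(x) plus (h_ex/|ln e| - h0) a(x^).  Uniform continuity of A0^ on a
   compact box containing D makes the first term small once s is small; boundedness of
   Omega and h_ex/|ln e| -> h0 make the second small once e is small.  So the integrand
   is uniformly small on D, which has finite measure. *)

Lemma compact_unif_continuous {R : realType} {T : pseudoMetricType R} {K : set T}
    {f : T -> R} :
  compact K -> continuous f -> forall eps : R, 0 < eps ->
  exists2 d : R, 0 < d & forall x y, K x -> K y -> ball x d y -> `|f x - f y| < eps.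
Proof.
move=> /compact_near_coveringP cK fc eps eps0.
have : \forall d \near (0 : R)^'+,
    K `<=` (fun x => forall y, K y -> ball x d y -> `|f x - f y| < eps).
  apply: cK => p Kp.
  have eps20 : 0 < eps / 2 by rewrite divr_gt0.
  have /cvgrPdist_lt/(_ _ eps20) /nbhs_ballP [r r0 fr] := fc p.
  have r20 : 0 < r / 2 by rewrite divr_gt0.
  near=> x' i => y Ky xy.
  have px' : ball p (r / 2) x' by near: x'; exact: nbhsx_ballx.
  have ir : i < r / 2 by near: i; exact: nbhs_right_lt.
  have py : ball p r y.
    by rewrite (splitr r); apply: ball_triangle px' _; apply: le_ball xy; exact: ltW.
  have fpy := fr _ py; rewrite /= in fpy.
  have -> : f x' - f y = (f p - f y) - (f p - f x') by ring.
  rewrite (splitr eps); apply: le_lt_trans (ler_normB _ _) _.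
  by rewrite ltrD //; apply: fr; apply: le_ball px'; lra.
move=> Kd; near (0 : R)^'+ => d.
exists d; first by near: d; exact: nbhs_right_gt.
by move=> x y Kx Ky; exact: (near Kd d).
Unshelve. all: by end_near.
Qed.

Lemma ge0_integral_le_bound_subset {d} {T : measurableType d} {R : realType}
    (mu : {measure set T -> \bar R}) {D K : set T} {f : T -> R} {C : R} :
  0 <= C -> measurable K -> D `<=` K -> (forall x, D x -> 0 <= f x <= C) ->
  (\int[mu]_(x in D) (f x)%:E <= C%:E * mu K)%E.
Proof.
move=> C0 mK DK fC; rewrite -integral_cst //.
have f0 x : D x -> (0 <= (f x)%:E)%E by move=> /fC /andP[f0 _]; rewrite lee_fin.
rewrite (ge0_integralE _ f0) ge0_integralE; last by move=> x _; rewrite lee_fin.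
apply: ereal_sup_le => _ [h /= hf <-]; exists h => //= x.
apply: le_trans (hf x) _; rewrite /patch; case: ifPn => [xD|_].
  have /fC/andP[_ fxC] : D x by rewrite -inE.
  by rewrite mem_set ?lee_fin //; apply: DK; rewrite -inE.
by case: ifPn; rewrite ?lee_fin.
Qed.

Lemma mu3_box (R : realType) (a1 b1 a2 b2 a3 b3 : R) :
  a1 < b1 -> a2 < b2 -> a3 < b3 ->
  mu3 ((`[a1, b1] `*` `[a2, b2]) `*` `[a3, b3]) = ((b1 - a1) * (b2 - a2) * (b3 - a3))%:E.
Proof.
move=> ab1 ab2 ab3.
have itvE a b : a < b -> lebesgue_measure (`[a, b] : set R) = (b - a)%:E.
  by move=> ab; rewrite lebesgue_measure_itv /= lte_fin ab -EFinB.
rewrite /mu3 /=.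
rewrite (@product_measure1E _ _ _ _ R (lebesgue_measure \x lebesgue_measure)%E
  lebesgue_measure); last 2 first.
- by apply: measurableX; exact: measurable_itv.
- exact: measurable_itv.
rewrite !EFinM -!itvE //; congr (_ * _)%E.
by apply: product_measure1E; exact: measurable_itv.
Qed.

Section step_functions.
Context {R : realType}.

(* chi 0 is the open interval (0, s), the other chi n are half-open: hence t > 0. *)
Lemma chi_difference (s t : R) n : 0 < s -> 0 < t ->
  chi s n t = (n%:R * s <= t)%R%:R - (n.+1%:R * s <= t)%R%:R.
Proof.
move=> s0 t0; rewrite /chi; case: n => [|n] /=.
  by rewrite mul0r mul1r (ltW t0) t0 /= ltNge; case: leP; rewrite ?subrr ?subr0.
have : n.+1%:R * s <= n.+2%:R * s by rewrite ler_pM2r // ler_nat.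
by case: (leP (n.+1%:R * s) t); case: (ltP t (n.+2%:R * s)); case: (leP (n.+2%:R * s) t);
  rewrite /= ?subrr ?subr0 //; lra.
Qed.

Lemma chi_eq0_or_eq1 {s t : R} (n : nat) : 0 < s -> 0 < t ->
  chi s n t = 0 \/ (chi s n t = 1 /\ n%:R * s <= t < n.+1%:R * s).
Proof.
move=> s0 t0; rewrite chi_difference //.
have : n%:R * s <= n.+1%:R * s by rewrite ler_pM2r // ler_nat.
case: (leP (n%:R * s) t); case: (leP (n.+1%:R * s) t) => /=; rewrite ?subrr; try by left.
- by move=> *; right; rewrite subr0; split => //; apply/andP.
- by move=> *; exfalso; lra.
Qed.

Lemma sum_chi {s t : R} {N : nat} : 0 < s -> 0 < t < N%:R * s ->
  \sum_(n < N) chi s n t = 1.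
Proof.
move=> s0 /andP[t0 tNs]; pose F (n : nat) : R := (n%:R * s <= t)%R%:R.
rewrite (eq_bigr (fun n : 'I_N => - (F n.+1 - F n))); last first.
  by move=> n _; rewrite chi_difference // opprB.
rewrite sumrN -(big_mkord xpredT (fun n => F n.+1 - F n)) telescope_sumr //.
by rewrite opprB /F mul0r (ltW t0) leNgt tNs subr0.
Qed.

Lemma step_sum_dist_le (s t : R) (N : nat) (a : nat -> R) (A G : R) :
  0 < s -> 0 < t < N%:R * s ->
  (forall n, (n < N)%N -> n%:R * s <= t < n.+1%:R * s -> `|a n - A| <= G) ->
  `|\sum_(n < N) a n * chi s n t - A| <= G.
Proof.
move=> s0 tNs aA; have /andP[t0 _] := tNs.
have sum_mul_chi c : \sum_(n < N) c * chi s n t = c.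
  by rewrite -mulr_sumr sum_chi // mulr1.
rewrite -[X in _ - X]sum_mul_chi -sumrB -[leRHS]sum_mul_chi.
apply: le_trans (ler_norm_sum _ _ _) _; apply: ler_sum => n _.
rewrite -mulrBl normrM.
have [->|[-> tn]] := chi_eq0_or_eq1 n s0 t0; first by rewrite !mulr0 normr0.
by rewrite normr1 !mulr1; exact: aA.
Qed.

End step_functions.

Section Ahat_es_error.
Context {R : realType}.
Variables (hex : R -> R) (h0 : R) (A0 : @P3 R -> @P3 R) (L : R).

Let c e := hex e / `|ln e| - h0.
Let grid N (x : @P3 R) n := pt x.1.1 x.1.2 (n%:R * (L / N%:R)).

Lemma Ahat_es1E e N x : ln e != 0 ->
  (Ahat_es hex h0 A0 L e N x).1 =
  \sum_(n < N) ((A0 (grid N x n)).1.1 + c e * (- x.1.2 / 2)) * chi (L / N%:R) n x.2.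
Proof.
move=> lne0; apply: eq_bigr => n _; congr (_ * _).
by rewrite /Aeps /avec /c /grid /= /GRing.scale /=; field; rewrite normr_eq0.
Qed.

Lemma Ahat_es2E e N x : ln e != 0 ->
  (Ahat_es hex h0 A0 L e N x).2 =
  \sum_(n < N) ((A0 (grid N x n)).1.2 + c e * (x.1.1 / 2)) * chi (L / N%:R) n x.2.
Proof.
move=> lne0; apply: eq_bigr => n _; congr (_ * _).
by rewrite /Aeps /avec /c /grid /= /GRing.scale /=; field; rewrite normr_eq0.
Qed.

Lemma Ahat_es_sq_dist_le e N x g : ln e != 0 -> (0 < N)%N -> 0 < x.2 < L ->
  `|c e| * `|x.1.1| <= g -> `|c e| * `|x.1.2| <= g ->
  (forall n, (n < N)%N -> n%:R * (L / N%:R) <= x.2 < n.+1%:R * (L / N%:R) ->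
     `|(A0 (grid N x n)).1.1 - (A0 x).1.1| <= g /\
     `|(A0 (grid N x n)).1.2 - (A0 x).1.2| <= g) ->
  ((Ahat_es hex h0 A0 L e N x).1 - (A0 x).1.1) ^+ 2
  + ((Ahat_es hex h0 A0 L e N x).2 - (A0 x).1.2) ^+ 2 <= 8 * g ^+ 2.
Proof.
move=> lne0 N0 xL cx1 cx2 A0_grid.
have s0 : 0 < L / N%:R by rewrite divr_gt0 ?ltr0n //; case/andP: xL => *; lra.
have xNs : 0 < x.2 < N%:R * (L / N%:R).
  by rewrite mulrCA divff ?pnatr_eq0 -?lt0n // mulr1.
have shift_le k : `|c e| * `|k| <= g -> `|c e * (k / 2)| <= g.
  move=> ck; rewrite mulrA normf_div normrM normr_nat.
  have : 0 <= `|c e| * `|k| by rewrite mulr_ge0.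
  lra.
have dist_le (a : nat -> R) (A k : R) :
    `|c e| * `|k| <= g ->
    (forall n, (n < N)%N -> n%:R * (L / N%:R) <= x.2 < n.+1%:R * (L / N%:R) ->
       `|a n - A| <= g) ->
    `|\sum_(n < N) (a n + c e * (k / 2)) * chi (L / N%:R) n x.2 - A| <= 2 * g.
  move=> ck aA.
  apply: (step_sum_dist_le _ _ _ (fun n => a n + c e * (k / 2))) => // n nN xn.
  rewrite addrAC mulr_natl mulr2n; apply: le_trans (ler_normD _ _) _.
  by rewrite lerD ?shift_le ?aA.
have cNx2 : `|c e| * `|- x.1.2| <= g by rewrite normrN.
have := dist_le _ _ _ cNx2 (fun n nN xn => (A0_grid n nN xn).1).
have := dist_le _ _ _ cx1 (fun n nN xn => (A0_grid n nN xn).2).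
rewrite -Ahat_es1E // -Ahat_es2E // !ler_norml.
move=> /andP[? ?] /andP[? ?]; nra.
Qed.

End Ahat_es_error.

Section boxes.
Context {R : realType}.

Lemma ball_pt_vertical (x : @P3 R) (u r : R) :
  `|u - x.2| < r -> ball (pt x.1.1 x.1.2 u) r x.
Proof.
move=> ur; have r0 : 0 < r := le_lt_trans (normr_ge0 _) ur.
by split; [split|]; rewrite /ball /= ?subrr ?normr0.
Qed.

Lemma bounded_set2_coord {S : set (R * R)} : bounded_set2 S ->
  exists2 M : R, 0 < M & forall x, S x -> `|x.1| <= M /\ `|x.2| <= M.
Proof.
move=> [M SM]; exists (`|M| + 1) => [|x /SM]; first by rewrite ltr_pwDr.
rewrite (_ : `|x| = Num.max `|x.1| `|x.2|) // gt_max => /andP[x1 x2].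
by have := ler_norm M; split; lra.
Qed.

Lemma in_box3 {M L : R} (y : @P3 R) :
  `|y.1.1| <= M -> `|y.1.2| <= M -> 0 <= y.2 <= L ->
  ((`[-M, M] `*` `[-M, M]) `*` `[0, L]) y.
Proof. by move=> y1 y2 y3; split; [split|]; rewrite /= in_itv /= -?ler_norml. Qed.

Lemma cyl_subset_box {Om : set (R * R)} {L M : R} :
  (forall x, Om x -> `|x.1| <= M /\ `|x.2| <= M) ->
  cyl Om L `<=` (`[-M, M] `*` `[-M, M]) `*` `[0, L].
Proof.
move=> OmM x [/OmM[x1 x2] /andP[x30 x3L]].
by apply: in_box3; rewrite // (ltW x30) (ltW x3L).
Qed.

End boxes.

Section uniform_approximation.
Context {R : realType}.
Context {Om : set (R * R)} {L M : R} {hex : R -> R} {h0 : R} {A0 : @P3 R -> @P3 R}.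
Hypotheses (L0 : 0 < L) (M0 : 0 < M) (OmM : forall x, Om x -> `|x.1| <= M /\ `|x.2| <= M).
Hypothesis hex_lim : (hex e / `|ln e|) @[e --> 0^'+] --> h0.
Hypotheses (A01_cont : continuous (fun x => (A0 x).1.1))
  (A02_cont : continuous (fun x => (A0 x).1.2)).

Lemma Ahat_es_unif_close g : 0 < g -> exists2 delta : R, 0 < delta &
  forall e N, 0 < e < delta -> (0 < N)%N -> L / N%:R < delta -> forall x, cyl Om L x ->
    ((Ahat_es hex h0 A0 L e N x).1 - (A0 x).1.1) ^+ 2
    + ((Ahat_es hex h0 A0 L e N x).2 - (A0 x).1.2) ^+ 2 <= 8 * g ^+ 2.
Proof.
move=> g0; pose K : set (@P3 R) := (`[-M, M] `*` `[-M, M]) `*` `[0, L].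
have cK : compact K.
  by apply: compact_setX; [apply: compact_setX|]; exact: segment_compact.
have [d1 d1_gt0 A01_close] := compact_unif_continuous cK A01_cont _ g0.
have [d2 d2_gt0 A02_close] := compact_unif_continuous cK A02_cont _ g0.
have /cvgrPdist_lt/(_ (g / M) (divr_gt0 g0 M0)) /nbhs_ballP [d3 d3_gt0 near_h0] :=
  hex_lim.
exists (Num.min (Num.min d1 d2) (Num.min d3 1)).
  by rewrite !lt_min d1_gt0 d2_gt0 d3_gt0 ltr01.
move=> e N /andP[e0]; rewrite !lt_min => /andP[/andP[_ _] /andP[ed3 e1]] N0.
move=> /andP[/andP[sd1 sd2] _] x Dx.
have [/OmM[x1M x2M] /andP[x30 x3L]] := Dx.
have lne0 : ln e != 0 by rewrite lt_eqF // ln_lt0 // e0 e1.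
have c_small (k : R) : `|k| <= M -> `|hex e / `|ln e| - h0| * `|k| <= g.
  move=> kM; rewrite -[g](divfK (lt0r_neq0 M0)); apply: ler_pM => //.
  rewrite distrC; apply/ltW/near_h0 => //.
  by rewrite /ball /= sub0r normrN gtr0_norm.
apply: Ahat_es_sq_dist_le; rewrite ?c_small ?x30 ?x3L //.
move=> n nN /andP[nx xn]; set s := L / N%:R in nx xn sd1 sd2.
have s0 : 0 < s by rewrite divr_gt0 ?ltr0n.
have grid_K : K (pt x.1.1 x.1.2 (n%:R * s)).
  by apply: in_box3; rewrite //= mulr_ge0 ?ler0n ?(ltW s0) //= (le_trans nx (ltW x3L)).
have grid_dist : `|n%:R * s - x.2| <= s.
  by rewrite distrC ger0_norm ?subr_ge0 //; move: xn; rewrite -natr1 mulrDl mul1r; lra.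
have Kx : K x := cyl_subset_box OmM _ Dx.
by split; apply/ltW; [apply: A01_close | apply: A02_close] => //;
  apply: ball_pt_vertical; apply: le_lt_trans grid_dist _.
Qed.

End uniform_approximation.

Theorem theorem5p1 (R : realType) (Om : set (R * R)) (L : R) (hex : R -> R) (h0 : R)
    (v0 : (R * R) * R -> R * R) (A0 : (R * R) * R -> (R * R) * R) :
  smooth_sc_domain Om -> 0 < L ->
  (forall e : R, 0 < e -> 0 < hex e) ->
  0 <= h0 ->
  (hex e / `|ln e|) @[e --> 0^'+] --> h0 ->
  is_minimizer h0 (cyl Om L) v0 A0 ->
  continuous (fun x => (A0 x).1.1) -> continuous (fun x => (A0 x).1.2) ->
  forall eta : R, 0 < eta -> exists delta : R, 0 < delta /\
    forall (e : R) (N : nat), 0 < e < delta -> (0 < N)%N -> L / N%:R < delta ->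
      (\int[mu3]_(x in cyl Om L)
          (((Ahat_es hex h0 A0 L e N x).1 - (A0 x).1.1) ^+ 2
           + ((Ahat_es hex h0 A0 L e N x).2 - (A0 x).1.2) ^+ 2)%:E < eta%:E)%E.
Proof.
move=> [_ _ _ Om_bounded _] L0 _ _ hex_lim _ A01_cont A02_cont eta eta0.
have [M M0 OmM] := bounded_set2_coord Om_bounded.
pose m := (M + M) * (M + M) * L.
have m0 : 0 < m by rewrite !mulr_gt0 ?addr_gt0.
pose g := Num.sqrt (eta / (16 * m)).
have g0 : 0 < g by rewrite sqrtr_gt0 divr_gt0 // mulr_gt0.
have [delta delta0 close] := Ahat_es_unif_close L0 M0 OmM hex_lim A01_cont A02_cont _ g0.
exists delta; split => // e N eN N0 sN.
pose K : set (@P3 R) := (`[-M, M] `*` `[-M, M]) `*` `[0, L].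
have mK : measurable K by do 2?apply: measurableX; exact: measurable_itv.
apply: le_lt_trans
  (ge0_integral_le_bound_subset mu3 (C := 8 * g ^+ 2) _ mK (cyl_subset_box OmM) _) _.
- by rewrite mulr_ge0 ?sqr_ge0.
- by move=> x Dx; rewrite addr_ge0 ?sqr_ge0 ?close.
rewrite [X in (_ * X)%E](_ : _ = m%:E); last first.
  have -> : m = (M - - M) * (M - - M) * (L - 0) by rewrite opprK subr0.
  by apply: mu3_box; rewrite ?gtrN.
rewrite -EFinM lte_fin sqr_sqrtr; last by rewrite ltW // divr_gt0 // mulr_gt0.
have -> : 8 * (eta / (16 * m)) * m = eta / 2 by field; rewrite lt0r_neq0 //; lra.
lra.
Qed.
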